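(* Let $G$ and $H$ be finite simple graphs, each with at least two vertices. Then the modular product $G\diamond H$ has no two distinct vertices $x,y$ with $N_{G\diamond H}(x)=N_{G\diamond H}(y)$.
   Context: The modular product $G\diamond H$ has vertex set $V(G)\times V(H)$; distinct vertices $(g,h)$ and $(g',h')$ are adjacent iff ($g=g'$ and $hh'\in E(H)$), or ($gg'\in E(G)$ and $h=h'$), or ($gg'\in E(G)$ and $hh'\in E(H)$), or ($g\neq g'$, $h\neq h'$, $gg'\notin E(G)$ and $hh'\notin E(H)$). $N_X(v)$ denotes the open neighborhood of $v$ in a graph $X$. *)

From mathcomp Require Import all_boot.
Set Implicit Arguments. Unset Strict Implicit. Unset Printing Implicit Defensive.

Definition simple_graph (V : finType) (e : rel V) : Prop :=
  symmetric e /\ irreflexive e.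

Definition modular_product (T U : finType) (eG : rel T) (eH : rel U) : rel (T * U) :=
  fun x y =>
    let: (g, h) := x in let: (g', h') := y in
    (x != y) &&
    [|| (g == g') && eH h h',
        eG g g' && (h == h'),
        eG g g' && eH h h'
      | [&& g != g', h != h', ~~ eG g g' & ~~ eH h h'] ].

Definition open_nbhd (V : finType) (e : rel V) (v : V) : {set V} :=
  [set w | e v w].

From mathcomp Require Import all_boot.

Set Implicit Arguments.
Unset Strict Implicit.
Unset Printing Implicit Defensive.

(* Two vertices of a graph with equal neighbourhoods cannot be adjacent, since
   the graph is loopless.  For non-adjacent distinct (g,h), (g',h') of the
   modular product, either they share a coordinate, and moving the other
   coordinate of one of them to any other vertex of its factor gives a vertex
   adjacent to exactly one of them, or they differ in both coordinates with
   exactly one of gg', hh' an edge, and (g',h) or (g,h') separates them. *)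

Lemma card_gt1_neq (T : finType) (a : T) : 1 < #|T| -> exists b, b != a.
Proof.
move=> /card_gt1P [b [c [_ _ neq_bc]]].
by case: (eqVneq b a) => [<-|neq_ba]; [exists c; rewrite eq_sym | exists b].
Qed.

Lemma open_nbhd_eq_adj (V : finType) (e : rel V) (x y : V) :
  open_nbhd e x = open_nbhd e y -> e x =1 e y.
Proof. by move=> /setP eq_xy z; move: (eq_xy z); rewrite !inE. Qed.

Section ModularProduct.

Variables (T U : finType) (eG : rel T) (eH : rel U).
Hypotheses (sG : symmetric eG) (iG : irreflexive eG).
Hypotheses (sH : symmetric eH) (iH : irreflexive eH).

Local Notation mp := (modular_product eG eH).

Lemma modular_product_irr : irreflexive mp.
Proof. by case=> g h; rewrite /modular_product eqxx. Qed.

Lemma modular_product_eq1 (g : T) (h h' : U) : mp (g, h) (g, h') = eH h h'.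
Proof.
rewrite /modular_product xpair_eqE eqxx iG /= orbF.
by case: (eqVneq h h') => [->|]; rewrite ?iH.
Qed.

Lemma modular_product_eq2 (g g' : T) (h : U) : mp (g, h) (g', h) = eG g g'.
Proof.
rewrite /modular_product xpair_eqE eqxx iH /= !andbF !andbT !orbF /=.
by case: (eqVneq g g') => [->|]; rewrite ?iG.
Qed.

Lemma modular_product_neq (g g' : T) (h h' : U) :
  g' != g -> h' != h -> mp (g, h) (g', h') = (eG g g' == eH h h').
Proof.
rewrite ![g' == _]eq_sym ![h' == _]eq_sym => /negbTE neq_g /negbTE neq_h.
rewrite /modular_product xpair_eqE neq_g neq_h /=.
by case: (eG g g'); case: (eH h h').
Qed.

Lemma modular_product_separating (x y : T * U) :
  1 < #|T| -> 1 < #|U| -> x != y -> exists z, mp x z != mp y z.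
Proof.
case: x y => g h [g' h'] cardT cardU neq_xy.
case adj_yx: (mp (g', h') (g, h)).
  by exists (g, h); rewrite modular_product_irr adj_yx.
case: (eqVneq g g') adj_yx neq_xy => [<-|neq_g].
  rewrite modular_product_eq1 xpair_eqE eqxx andTb sH => nadj_h neq_h.
  have [g2 neq_g2] := card_gt1_neq g cardT; exists (g2, h).
  rewrite modular_product_eq2 modular_product_neq // sH nadj_h.
  by case: (eG g g2).
case: (eqVneq h h') => [<-|neq_h].
  rewrite modular_product_eq2 sG => nadj_g _.
  have [h2 neq_h2] := card_gt1_neq h cardU; exists (g, h2).
  rewrite modular_product_eq1 modular_product_neq // sG nadj_g.
  by case: (eH h h2).
rewrite modular_product_neq // sG sH => /negbT adj_gh _.
case adj_g: (eG g g').
- exists (g', h); rewrite modular_product_eq2 modular_product_eq1 adj_g.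
  by move: adj_gh; rewrite adj_g sH; case: (eH h h').
- exists (g, h'); rewrite modular_product_eq1 modular_product_eq2 sG adj_g.
  by move: adj_gh; rewrite adj_g; case: (eH h h').
Qed.

End ModularProduct.

Theorem mainTheorem1 (T U : finType) (eG : rel T) (eH : rel U) :
  simple_graph eG -> simple_graph eH ->
  1 < #|T| -> 1 < #|U| ->
  forall x y : T * U, x != y ->
    open_nbhd (modular_product eG eH) x != open_nbhd (modular_product eG eH) y.
Proof.
move=> [sG iG] [sH iH] cardT cardU x y neq_xy.
have [z sep_z] := modular_product_separating sG iG sH iH cardT cardU neq_xy.
by apply: contra sep_z => /eqP /open_nbhd_eq_adj ->.
Qed.
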